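(* Let $T$ be a tournament of odd order $n\ge 5$ and let $c_5(T)$ be the number of directed cycles of length $5$ in $T$. Then $$c_5(T)\le \frac{(n+1)n(n-1)(n-2)(n-3)}{160},$$ with equality if and only if $T$ is doubly regular.
   Context: A tournament is an orientation of a complete graph. A tournament of order $n$ is doubly regular if it is regular (every out-degree equals $\frac{n-1}{2}$) and the out-set of every vertex induces a regular subtournament; equivalently, every two distinct vertices have exactly $\frac{n-3}{4}$ common out-neighbours (this forces $n\equiv 3\pmod 4$). *)

From mathcomp Require Import all_boot.
Set Implicit Arguments. Unset Strict Implicit. Unset Printing Implicit Defensive.

Definition tournament (T : finType) (e : rel T) : Prop :=
  (forall x, ~~ e x x) /\
  (forall x y, x != y -> e x y || e y x) /\
  (forall x y, e x y -> ~~ e y x).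

Definition outset (T : finType) (e : rel T) (v : T) : {set T} :=
  [set w | e v w].

Definition regular_on (T : finType) (e : rel T) (S : {set T}) : Prop :=
  forall u, u \in S -> 2 * #|[set w in S | e u w]| = #|S| - 1.

Definition regular_tournament (T : finType) (e : rel T) : Prop :=
  regular_on e [set: T].

Definition doubly_regular (T : finType) (e : rel T) : Prop :=
  regular_tournament e /\ (forall v, regular_on e (outset e v)).

(* Directed 5-cycles: closed walks (v0,...,v4) of pairwise distinct vertices
   with arcs v_i -> v_{i+1 mod 5}; each cycle corresponds to exactly 5 such
   sequences (its rotations), so we divide by 5. *)
Definition cyc5_seqs (T : finType) (e : rel T) : {set {ffun 'I_5 -> T}} :=
  [set f : {ffun 'I_5 -> T} | injectiveb f && [forall i, e (f i) (f (ordS i))]].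

Definition c5 (T : finType) (e : rel T) : nat := #|cyc5_seqs e| %/ 5.

(* Let A be the adjacency matrix of T, B = A - A^T its skew-symmetric sign
   matrix and J = 1 1^T, so that 2A = J + B - I.  A closed walk of length 5 in
   a tournament cannot repeat a vertex, hence 5 c5(T) = tr A^5.  Expanding
   tr (J + B - I)^5 with J of rank one, and using that odd powers of B have
   zero trace and zero quadratic form, gives
     32 tr A^5 = (n+1)n(n-1)(n-2)(n-3) - 5 (D + (n^2 - 4n + 6) W - V),
   where W = |B 1|^2 measures the irregularity of the scores, V = |B^2 1|^2,
   and D = sum_{x <> y} ((B^2)_xy^2 - 1) >= 0 because (B^2)_xy is odd when n
   is odd.  A skew-symmetric matrix satisfies |B w|^2 <= |B|_F^2 |w|^2 / 2,
   here V <= n(n-1) W / 2, so twice the deficit is at least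
   2D + (n-3)(n-4) W >= 0.  Equality forces W = 0 and (B^2)_xy = +-1, and for
   a regular tournament this means (B^2)_xy = 1, which is double regularity. *)

Set Warnings "-notation-overridden,-ambiguous-paths".
From mathcomp Require Import all_boot all_order all_algebra.
From mathcomp Require Import ring lra zify.
Import Order.TTheory GRing.Theory Num.Theory.
Set Implicit Arguments. Unset Strict Implicit. Unset Printing Implicit Defensive.
Local Open Scope ring_scope.

Definition qform (R : pzRingType) m (u : 'cV[R]_m) (X : 'M[R]_m) : R :=
  (u^T *m X *m u) 0 0.

Lemma mx11_mulmx (R : comPzRingType) (X Y : 'M[R]_1) : (X *m Y) 0 0 = X 0 0 * Y 0 0.
Proof. by rewrite mxE big_ord1. Qed.

Lemma trmxX (R : comPzRingType) m (X : 'M[R]_m) k : (X ^+ k)^T = X^T ^+ k.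
Proof.
elim: k => [|k IHk]; first by rewrite !expr0 trmx1.
by rewrite exprS -mulmxE trmx_mul IHk mulmxE -exprSr.
Qed.

Lemma exprZ_mx (R : comPzRingType) m (c : R) (X : 'M[R]_m) k :
  (c *: X) ^+ k = c ^+ k *: X ^+ k.
Proof.
elim: k => [|k IHk]; first by rewrite !expr0 scale1r.
by rewrite !exprS IHk -!mulmxE -scalemxAl -scalemxAr scalerA.
Qed.

Lemma mxtrace_trmx_mul (R : comPzRingType) m (X : 'M[R]_m) :
  \tr (X^T *m X) = \sum_i \sum_j X i j ^+ 2.
Proof.
rewrite exchange_big; apply: eq_bigr => j _; rewrite mxE.
by apply: eq_bigr => i _; rewrite mxE expr2.
Qed.

Lemma qform_trmx_mul (R : comPzRingType) m (u : 'cV[R]_m) (X : 'M[R]_m) :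
  qform u (X^T *m X) = \sum_i (X *m u) i 0 ^+ 2.
Proof.
rewrite /qform mulmxA -trmx_mul -mulmxA mxE; apply: eq_bigr => i _.
by rewrite mxE expr2.
Qed.

Section RankOnePerturbation.

Variables (R : comPzRingType) (m : nat) (u : 'cV[R]_m) (M : 'M[R]_m).
Local Notation P := (u *m u^T + M).

Lemma qform_rank1_exprS j k :
  qform u (M ^+ j * P ^+ k.+1) =
  qform u (M ^+ j) * qform u (P ^+ k) + qform u (M ^+ j.+1 * P ^+ k).
Proof.
rewrite /qform exprS mulrA mulrDr mulrDl exprSr -!mulmxE mulmxDr mulmxDl mxE.
by rewrite -!mulmxA (mulmxA (M ^+ j) u) (mulmxA u^T) mx11_mulmx.
Qed.

Lemma qform_rank1_exprS0 k :
  qform u (P ^+ k.+1) = qform u 1 * qform u (P ^+ k) + qform u (M ^+ 1 * P ^+ k).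
Proof. by have := qform_rank1_exprS 0 k; rewrite !expr0 mul1r. Qed.

Lemma mxtrace_rank1_exprS k j :
  \tr (P ^+ k.+1 * M ^+ j) = qform u (M ^+ j * P ^+ k) + \tr (P ^+ k * M ^+ j.+1).
Proof.
rewrite exprSr -mulrA mulrDl mulrDr exprS !mulrA mxtraceD; congr (_ + _).
by rewrite -!mulmxE !mulmxA -(mulmxA _ u^T) mxtrace_mulC trace_mx11 /qform !mulmxA.
Qed.

Lemma mxtrace_rank1_exp5 (q := fun k => qform u (M ^+ k)) :
  \tr (P ^+ 5) = \tr (M ^+ 5) + 5 * q 4%N + 5 * q 0%N * q 3%N + 5 * q 1%N * q 2%N
    + 5 * q 0%N ^+ 2 * q 2%N + 5 * q 0%N * q 1%N ^+ 2 + 5 * q 0%N ^+ 3 * q 1%N + q 0%N ^+ 5.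
Proof.
rewrite -[P ^+ 5]mulr1 -(expr0 M) !mxtrace_rank1_exprS.
rewrite ?(qform_rank1_exprS, qform_rank1_exprS0) !expr0 !mul1r !mulr1 /q expr0 expr1.
ring.
Qed.

End RankOnePerturbation.

Lemma qformB (R : pzRingType) m (u : 'cV[R]_m) (X Y : 'M[R]_m) :
  qform u (X - Y) = qform u X - qform u Y.
Proof. by rewrite /qform mulmxBr mulmxBl !mxE. Qed.

Lemma qformN (R : pzRingType) m (u : 'cV[R]_m) (X : 'M[R]_m) :
  qform u (- X) = - qform u X.
Proof. by rewrite /qform mulmxN mulNmx !mxE. Qed.

Lemma subr1_exprS_mul (R : pzRingType) (x : R) k j :
  (x - 1) ^+ k.+1 * x ^+ j = (x - 1) ^+ k * x ^+ j.+1 - (x - 1) ^+ k * x ^+ j.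
Proof. by rewrite exprSr -mulrA mulrBl mul1r -exprS mulrBr. Qed.

Section SkewSymmetric.

Variables (R : numDomainType) (m : nat) (B : 'M[R]_m).
Hypothesis skewB : B^T = - B.

Lemma skew_exprT_odd k : odd k -> (B ^+ k)^T = - B ^+ k.
Proof. by move=> oddk; rewrite trmxX skewB exprNn -signr_odd oddk mulN1r. Qed.

Lemma mxtrace_skew_odd k : odd k -> \tr (B ^+ k) = 0.
Proof.
by move=> oddk; apply/eqP; rewrite -eqNr -{2}mxtrace_tr skew_exprT_odd // linearN.
Qed.

Lemma qform_skew_odd u k : odd k -> qform u (B ^+ k) = 0.
Proof.
move=> oddk; apply/eqP; rewrite -eqNr /qform -trace_mx11 -{2}mxtrace_tr.
by rewrite !trmx_mul trmxK skew_exprT_odd // mulNmx mulmxN linearN mulmxA.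
Qed.

Lemma skew_expr2 : B ^+ 2 = - (B^T *m B).
Proof. by rewrite skewB mulNmx opprK mulmxE expr2. Qed.

Lemma skew_expr4 : B ^+ 4 = (B *m B)^T *m (B *m B).
Proof. by rewrite trmx_mul skewB !mulmxE mulrNN -expr2 -exprD. Qed.

Lemma mxtrace_skew_sqr : \tr (B ^+ 2) = - \sum_i \sum_j B i j ^+ 2.
Proof. by rewrite skew_expr2 -mxtrace_trmx_mul linearN. Qed.

Lemma mxtrace_skew_exp4 : \tr (B ^+ 4) = \sum_i \sum_j (B *m B) i j ^+ 2.
Proof. by rewrite skew_expr4 mxtrace_trmx_mul. Qed.

Lemma qform_skew_sqr u : qform u (B ^+ 2) = - \sum_i (B *m u) i 0 ^+ 2.
Proof. by rewrite skew_expr2 qformN qform_trmx_mul. Qed.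

Lemma qform_skew_exp4 u : qform u (B ^+ 4) = \sum_i (B *m B *m u) i 0 ^+ 2.
Proof. by rewrite skew_expr4 qform_trmx_mul. Qed.

Lemma mxtrace_skew_rank1_exp5 u (s := qform u 1) :
  \tr ((u *m u^T + (B - 1)) ^+ 5) =
    (s - 1) ^+ 5 + 1 - m%:R - 10 * \tr (B ^+ 2) - 5 * \tr (B ^+ 4)
    + 5 * qform u (B ^+ 4) + 5 * (s ^+ 2 - 4 * s + 6) * qform u (B ^+ 2).
Proof.
have mul_B0 k : (B - 1) ^+ k = (B - 1) ^+ k * B ^+ 0 by rewrite expr0 mulr1.
rewrite mxtrace_rank1_exp5 [(B - 1) ^+ 5]mul_B0 [(B - 1) ^+ 4]mul_B0 [(B - 1) ^+ 3]mul_B0.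
rewrite [(B - 1) ^+ 2]mul_B0 [(B - 1) ^+ 1]mul_B0 !subr1_exprS_mul !expr0 !mul1r.
rewrite !(raddfB (mxtrace (n:=m))) /= !qformB.
rewrite !(mxtrace_skew_odd (k := 1%N), mxtrace_skew_odd (k := 3%N)) //.
rewrite (mxtrace_skew_odd (k := 5%N)) //.
rewrite !(qform_skew_odd u (k := 1%N), qform_skew_odd u (k := 3%N)) // (mxtrace1 R m) /s.
ring.
Qed.

End SkewSymmetric.

Lemma sum_antisym_eq0 (R : numDomainType) (I : finType) (F : I -> I -> R) :
  (forall i j, F j i = - F i j) -> \sum_i \sum_j F i j = 0.
Proof.
move=> FN; apply/eqP; rewrite -eqNr; apply/eqP.
rewrite {2}exchange_big /= -sumrN; apply: eq_bigr => i _.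
by rewrite -sumrN; apply: eq_bigr => j _; rewrite FN opprK.
Qed.

Lemma skew_sum_sqr_le (R : realDomainType) (I : finType) (b : I -> I -> R) (w : I -> R) :
  (forall i j, b j i = - b i j) -> 0 < \sum_i \sum_j b i j ^+ 2 ->
  2 * \sum_i (\sum_j b i j * w j) ^+ 2 <= (\sum_i \sum_j b i j ^+ 2) * \sum_i w i ^+ 2.
Proof.
move=> bN; set K := \sum_i \sum_j _ => K_gt0.
pose y i := \sum_j b i j * w j; rewrite -/(y _).
set Y := \sum_i y i ^+ 2; set W := \sum_i w i ^+ 2.
pose z i j := y i * w j - y j * w i.
(* Since sum_i y_i w_i = 0, sum b z = 2 Y and sum z^2 = 2 Y W; expand the
   nonnegative sum of (2 Y b - K z)^2. *)
have W_ge0 : 0 <= W by apply: sumr_ge0 => i _; apply: sqr_ge0.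
have yw0 : \sum_i y i * w i = 0.
  transitivity (\sum_i \sum_j b i j * w j * w i).
    by apply: eq_bigr => i _; rewrite mulr_suml.
  by apply: sum_antisym_eq0 => i j; rewrite bN; ring.
have bz : \sum_i \sum_j b i j * z i j = 2 * Y.
  have YE : Y = \sum_i \sum_j b i j * y i * w j.
    by apply: eq_bigr => i _; rewrite expr2 {2}/y mulr_sumr; apply: eq_bigr => j _; ring.
  have G0 : \sum_i \sum_j b i j * (y i * w j + y j * w i) = 0.
    by apply: sum_antisym_eq0 => i j; rewrite bN; ring.
  rewrite YE -[RHS]subr0 -[X in _ - X]G0 mulr_sumr -sumrB; apply: eq_bigr => i _.
  by rewrite mulr_sumr -sumrB; apply: eq_bigr => j _; rewrite /z; ring.
have zz : \sum_i \sum_j z i j ^+ 2 = 2 * Y * W.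
  transitivity (\sum_i \sum_j (y i ^+ 2 * w j ^+ 2 + w i ^+ 2 * y j ^+ 2
                                - 2 * (y i * w i) * (y j * w j))).
    by apply: eq_bigr => i _; apply: eq_bigr => j _; rewrite /z; ring.
  under eq_bigr do rewrite sumrB big_split /=.
  rewrite sumrB big_split /= -!big_distrlr /= -mulr_sumr yw0 -/Y -/W; ring.
have expand : \sum_i \sum_j (2 * Y * b i j - K * z i j) ^+ 2 =
                (2 * K * Y) * (K * W - 2 * Y).
  transitivity (\sum_i \sum_j (4 * Y ^+ 2 * b i j ^+ 2 + K ^+ 2 * z i j ^+ 2
                                - 4 * Y * K * (b i j * z i j))).
    by apply: eq_bigr => i _; apply: eq_bigr => j _; ring.
  under eq_bigr do rewrite sumrB big_split /= -!mulr_sumr.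
  by rewrite sumrB big_split /= -!mulr_sumr bz zz -/K; ring.
have : 0 <= (2 * K * Y) * (K * W - 2 * Y).
  rewrite -expand; apply: sumr_ge0 => i _; apply: sumr_ge0 => j _; apply: sqr_ge0.
have [->|Y_neq0] := eqVneq Y 0.
  by rewrite !mulr0 => _; apply: mulr_ge0 => //; apply: ltW.
have Y_gt0 : 0 < Y by rewrite lt0r Y_neq0; apply: sumr_ge0 => i _; apply: sqr_ge0.
by rewrite pmulr_rge0 ?subr_ge0 // !mulr_gt0.
Qed.

Lemma int_cube_id (t : int) : t ^+ 3 = t -> t = t ^+ 2 - 2 * (t == -1)%:R.
Proof.
move=> t3; have : t * ((t - 1) * (t + 1)) = t ^+ 3 - t by ring.
rewrite t3 subrr => /eqP.
by rewrite !mulf_eq0 subr_eq0 addr_eq0 => /or3P [] /eqP ->.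
Qed.

Lemma sumr_const_card (R : pzSemiRingType) (T : finType) (c : R) :
  \sum_(x : T) c = #|T|%:R * c.
Proof. by rewrite sumr_const mulr_natl. Qed.

Definition ffun_of_5tuple (T : Type) (p : T * T * T * T * T) : {ffun 'I_5 -> T} :=
  [ffun i : 'I_5 => nth p.1.1.1.1 [:: p.1.1.1.1; p.1.1.1.2; p.1.1.2; p.1.2; p.2] i].

Lemma ffun_of_5tuple_bij (T : Type) : bijective (@ffun_of_5tuple T).
Proof.
pose tuple_of (f : {ffun 'I_5 -> T}) :=
  (f (inord 0), f (inord 1), f (inord 2), f (inord 3), f (inord 4)).
exists tuple_of => [[[[[x0 x1] x2] x3] x4]|f].
  by rewrite /tuple_of !ffunE /= !inordK.
apply/ffunP => i; rewrite ffunE /=.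
by case: i => [[|[|[|[|[|k]]]]] lt_k5] //=; congr (f _); apply/val_inj; rewrite /= inordK.
Qed.

Lemma sum_ffun5 (R : nmodType) (T : finType) (F : {ffun 'I_5 -> T} -> R) :
  \sum_f F f = \sum_x0 \sum_x1 \sum_x2 \sum_x3 \sum_x4
                  F (ffun_of_5tuple (x0, x1, x2, x3, x4)).
Proof.
have sum_pair (A B : finType) (G : A * B -> R) : \sum_p G p = \sum_a \sum_b G (a, b).
  by rewrite pair_bigA; apply: eq_bigr => -[].
rewrite (reindex (@ffun_of_5tuple T)) /=; last exact/onW_bij/ffun_of_5tuple_bij.
by rewrite !sum_pair.
Qed.

Section TournamentMatrices.

Variables (T : finType) (e : rel T).
Hypothesis tourn : tournament e.
Local Notation n := #|T|.

Definition arc_sign x y : int := if e x y then 1 else if e y x then -1 else 0.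
Definition score x := \sum_y arc_sign x y.
Definition arc_sign2 x y := \sum_z arc_sign x z * arc_sign z y.

Definition sign_mx : 'M[int]_n := \matrix_(i, j) arc_sign (enum_val i) (enum_val j).
Definition adj_mx : 'M[int]_n := \matrix_(i, j) (e (enum_val i) (enum_val j))%:R.

Lemma arc_signN x y : arc_sign y x = - arc_sign x y.
Proof.
have [_ [_ asym]] := tourn; rewrite /arc_sign.
by case exy: (e x y); case eyx: (e y x) => //; have := asym _ _ exy; rewrite eyx.
Qed.

Lemma arc_sign_sqr x y : arc_sign x y ^+ 2 = (x != y)%:R.
Proof.
have [irr [total _]] := tourn; rewrite /arc_sign.
have [->|/total] := eqVneq x y; first by rewrite (negPf (irr y)).
by case: (e x y); case: (e y x).
Qed.

Lemma arc_sign_cube x y : arc_sign x y ^+ 3 = arc_sign x y.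
Proof. by rewrite /arc_sign; case: (e x y); case: (e y x). Qed.

Lemma sum_enum_val (F : T -> int) : \sum_(i < n) F (enum_val i) = \sum_x F x.
Proof. by rewrite -big_enum_val. Qed.

Lemma sum_neq (x : T) : \sum_y ((x != y)%:R : int) = n%:R - 1.
Proof.
rewrite (bigD1 x) //= eqxx add0r (eq_bigr (fun _ => 1)) => [|y]; last first.
  by rewrite eq_sym => ->.
by rewrite sumr_const cardC1 -subn1 natrB //; apply/card_gt0P; exists x.
Qed.

Lemma arc_sign2_diag x : arc_sign2 x x = 1 - n%:R.
Proof.
rewrite /arc_sign2 -opprB -(sum_neq x) -sumrN; apply: eq_bigr => z _.
by rewrite -arc_sign_sqr (arc_signN x z) mulrN expr2.
Qed.

Lemma arc_sign2C x y : arc_sign2 x y = arc_sign2 y x.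
Proof.
by apply: eq_bigr => z _; rewrite (arc_signN x z) (arc_signN z y) mulrNN mulrC.
Qed.

Lemma arc_sign2_neq0 x y : odd n -> x != y -> arc_sign2 x y != 0.
Proof.
(* Every term is +-1 except the two vanishing ones z = x, y, so the sum has
   the parity of n - 2. *)
move=> oddn xy; pose t z := arc_sign x z * arc_sign z y.
have tE z : t z = (x != z)%:R - (z == y)%:R - 2 * (t z == -1)%:R.
  have t2 : t z ^+ 2 = (x != z)%:R - (z == y)%:R.
    rewrite exprMn !arc_sign_sqr.
    by have [->|_] := eqVneq z y; [rewrite xy subrr mulr0 | rewrite mulr1 subr0].
  by rewrite -t2 -int_cube_id // exprMn !arc_sign_cube.
have -> : arc_sign2 x y = n%:R - 2 - 2 * \sum_z ((t z == -1)%:R : int).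
  rewrite /arc_sign2 (eq_bigr _ (fun z _ => tE z)) !sumrB sum_neq -mulr_sumr.
  by rewrite (bigD1 y) //= eqxx big1 => [|z /negPf ->] //=; ring.
have : n = ((n./2).*2 + 1)%N by rewrite addn1 -{1}(odd_double_half n) oddn.
move: (\sum_z _) n./2 n => s k n' ->; rewrite natrD -muln2 natrM natz; apply/eqP; lia.
Qed.

Lemma sum_arc_sign2 x : \sum_y arc_sign2 x y = \sum_z arc_sign x z * score z.
Proof. by rewrite exchange_big; apply: eq_bigr => z _; rewrite mulr_sumr. Qed.

Lemma sign_mx_skew : sign_mx^T = - sign_mx.
Proof. by apply/matrixP => i j; rewrite !mxE arc_signN. Qed.

Lemma sign_mx2E i j : (sign_mx *m sign_mx) i j = arc_sign2 (enum_val i) (enum_val j).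
Proof. by rewrite mxE /arc_sign2 -sum_enum_val; apply: eq_bigr => k _; rewrite !mxE. Qed.

Lemma sign_mx_onesE i : (sign_mx *m const_mx 1 : 'cV_n) i 0 = score (enum_val i).
Proof. by rewrite mxE /score -sum_enum_val; apply: eq_bigr => k _; rewrite !mxE mulr1. Qed.

Lemma sign_mx2_onesE i :
  (sign_mx *m sign_mx *m const_mx 1 : 'cV_n) i 0 = \sum_y arc_sign (enum_val i) y * score y.
Proof.
rewrite -mulmxA mxE -sum_enum_val; apply: eq_bigr => k _.
by rewrite sign_mx_onesE mxE.
Qed.

Lemma adj_mx_decomp :
  2 *: adj_mx = const_mx 1 *m (const_mx 1 : 'cV_n)^T + (sign_mx - 1).
Proof.
have [irr [total asym]] := tourn; apply/matrixP => i j.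
rewrite !mxE big_ord1 !mxE /arc_sign.
have [<-|ij] := eqVneq i j; first by rewrite (negPf (irr _)) /=; ring.
have /total : enum_val i != enum_val j by rewrite (inj_eq enum_val_inj).
by case exy: (e _ _); case eyx: (e _ _) => //= _; have := asym _ _ exy; rewrite eyx.
Qed.

Lemma qform_ones1 : qform (const_mx 1 : 'cV[int]_n) 1 = n%:R.
Proof.
rewrite /qform mulmx1 mxE (eq_bigr (fun _ => 1)) => [|k _]; last by rewrite !mxE mulr1.
by rewrite sumr_const card_ord.
Qed.

Lemma sum2_enum_val (F : T -> T -> int) :
  \sum_(i < n) \sum_(j < n) F (enum_val i) (enum_val j) = \sum_x \sum_y F x y.
Proof. by rewrite -sum_enum_val; apply: eq_bigr => i _; rewrite sum_enum_val. Qed.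

Lemma sum_arc_sign_sqr : \sum_x \sum_y arc_sign x y ^+ 2 = n%:R * (n%:R - 1).
Proof.
under eq_bigr do under eq_bigr do rewrite arc_sign_sqr.
by under eq_bigr do rewrite sum_neq; rewrite sumr_const_card.
Qed.

Definition sum_score_sqr := \sum_x score x ^+ 2.
Definition sum_sign_score_sqr := \sum_x (\sum_y arc_sign x y * score y) ^+ 2.
Definition arc_sign2_excess := \sum_x \sum_(y | y != x) (arc_sign2 x y ^+ 2 - 1).
Definition c5_deficit := arc_sign2_excess
  + (n%:R ^+ 2 - 4 * n%:R + 6) * sum_score_sqr - sum_sign_score_sqr.

Lemma mxtrace_sign_mx2 : \tr (sign_mx ^+ 2) = - (n%:R * (n%:R - 1)).
Proof.
rewrite mxtrace_skew_sqr ?sign_mx_skew // -sum_arc_sign_sqr.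
rewrite -(sum2_enum_val (fun x y => arc_sign x y ^+ 2)).
by under eq_bigr do under eq_bigr do rewrite mxE.
Qed.

Lemma mxtrace_sign_mx4 : \tr (sign_mx ^+ 4) = arc_sign2_excess + n%:R ^+ 2 * (n%:R - 1).
Proof.
rewrite mxtrace_skew_exp4 ?sign_mx_skew //.
under eq_bigr do under eq_bigr do rewrite sign_mx2E.
rewrite (sum2_enum_val (fun x y => arc_sign2 x y ^+ 2)).
transitivity (\sum_x (\sum_(y | y != x) (arc_sign2 x y ^+ 2 - 1) + n%:R * (n%:R - 1))).
  apply: eq_bigr => x _; rewrite (bigD1 x) //= arc_sign2_diag sumrB sumr_const cardC1.
  have n_gt0 : (0 < n)%N by apply/card_gt0P; exists x.
  by rewrite -subn1 natrB //; ring.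
by rewrite big_split sumr_const_card /= -/arc_sign2_excess; ring.
Qed.

Lemma qform_sign_mx2 : qform (const_mx 1) (sign_mx ^+ 2) = - sum_score_sqr.
Proof.
rewrite qform_skew_sqr ?sign_mx_skew //; congr (- _).
rewrite /sum_score_sqr -(sum_enum_val (fun x => score x ^+ 2)).
by apply: eq_bigr => i _; rewrite sign_mx_onesE.
Qed.

Lemma qform_sign_mx4 : qform (const_mx 1) (sign_mx ^+ 4) = sum_sign_score_sqr.
Proof.
rewrite qform_skew_exp4 ?sign_mx_skew //.
rewrite /sum_sign_score_sqr.
rewrite -(sum_enum_val (fun x => (\sum_y arc_sign x y * score y) ^+ 2)).
by apply: eq_bigr => i _; rewrite sign_mx2_onesE.
Qed.

Lemma mxtrace_adj_mx5 :
  32 * \tr (adj_mx ^+ 5) =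
  (n%:R + 1) * n%:R * (n%:R - 1) * (n%:R - 2) * (n%:R - 3) - 5 * c5_deficit.
Proof.
have -> : 32 * \tr (adj_mx ^+ 5) = \tr ((2 *: adj_mx) ^+ 5) by rewrite exprZ_mx mxtraceZ.
rewrite adj_mx_decomp mxtrace_skew_rank1_exp5 ?sign_mx_skew // qform_ones1.
rewrite mxtrace_sign_mx2 mxtrace_sign_mx4 qform_sign_mx2 qform_sign_mx4 /c5_deficit.
ring.
Qed.

Lemma c5_deficit_lower : (1 < n)%N ->
  2 * arc_sign2_excess + (n%:R - 3) * (n%:R - 4) * sum_score_sqr <= 2 * c5_deficit.
Proof.
move=> n_gt1; have K_gt0 : 0 < n%:R * (n%:R - 1) :> int.
  by rewrite natz; nia.
have := skew_sum_sqr_le score arc_signN; rewrite sum_arc_sign_sqr => /(_ K_gt0).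
rewrite -/sum_score_sqr -/sum_sign_score_sqr /c5_deficit => V_le; lra.
Qed.

Lemma arc_sign2_sqr_ge1 x y : odd n -> x != y -> 1 <= arc_sign2 x y ^+ 2.
Proof.
move=> oddn /(arc_sign2_neq0 oddn)/eqP.
by move: (arc_sign2 x y) => c c_neq0; rewrite expr2; nia.
Qed.

Lemma arc_sign2_excess_ge0 : odd n -> 0 <= arc_sign2_excess.
Proof.
move=> oddn; apply: sumr_ge0 => x _; apply: sumr_ge0 => y yx.
by rewrite subr_ge0 arc_sign2_sqr_ge1 // eq_sym.
Qed.

Lemma c5_deficit_ge0 : odd n -> (1 < n)%N -> 0 <= c5_deficit.
Proof.
move=> oddn n_gt1; have := c5_deficit_lower n_gt1.
have := arc_sign2_excess_ge0 oddn.
have W_ge0 : 0 <= sum_score_sqr by apply: sumr_ge0 => x _; apply: sqr_ge0.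
have : 0 <= (n%:R - 3) * (n%:R - 4) :> int.
  by rewrite natz; case: (leqP n 3) => ?; nia.
move/mulr_ge0 => /(_ _ W_ge0); lra.
Qed.

Lemma card_set_in (S : {set T}) (P : pred T) :
  #|[set z in S | P z]| = (\sum_(z in S) P z)%N.
Proof.
rewrite -sum1_card big_mkcond [RHS]big_mkcond /=.
by apply: eq_bigr => z _; rewrite inE; case: (z \in S); case: (P z).
Qed.

Lemma sum_arc_sign_on (S : {set T}) u :
  \sum_(z in S) arc_sign u z = #|[set z in S | e u z]|%:R - #|[set z in S | e z u]|%:R.
Proof.
have [_ [_ asym]] := tourn; rewrite !card_set_in !natr_sum -sumrB.
apply: eq_bigr => z _; rewrite /arc_sign.
by case euz: (e u z); case ezu: (e z u) => //; have := asym _ _ euz; rewrite ezu.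
Qed.

Lemma card_out_in_on (S : {set T}) u :
  (#|[set z in S | e u z]| + #|[set z in S | e z u]| + (u \in S))%N = #|S|.
Proof.
have [irr [total asym]] := tourn.
have one z : z != u -> (e u z + e z u)%N = 1%N.
  move=> /negbTE zu; have := total u z; rewrite eq_sym zu => /(_ isT).
  by case euz: (e u z); case ezu: (e z u) => //; have := asym _ _ euz; rewrite ezu.
rewrite !card_set_in -big_split /= -sum1_card.
case uS: (u \in S); last first.
  by rewrite addn0; apply: eq_bigr => z zS; apply: one; apply: contraFneq uS => <-.
rewrite (bigD1 u) //= [RHS](bigD1 u) //= (negPf (irr u)) add0n addnC; congr (_ + _)%N.
by apply: eq_bigr => z /andP [_ zu]; apply: one.
Qed.

Lemma regular_on_sumE (S : {set T}) u : u \in S ->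
  (2 * #|[set w in S | e u w]| = #|S| - 1)%N <-> \sum_(z in S) arc_sign u z = 0.
Proof.
move=> uS; rewrite sum_arc_sign_on -(card_out_in_on S u) uS.
by move: #|_| #|_| => a b; rewrite !natz; split=> h; lia.
Qed.

Lemma arc_sign2_out v u : e v u ->
  arc_sign2 v u = 1 + score u - 2 * \sum_(z in outset e v) arc_sign u z.
Proof.
move=> evu; have [irr [total asym]] := tourn.
have term z : arc_sign v z * arc_sign z u =
    arc_sign u z - (z == v)%:R * arc_sign u z
    - 2 * ((z \in outset e v)%:R * arc_sign u z).
  rewrite (arc_signN z u) inE; move: (arc_sign u z) => a; rewrite /arc_sign.
  have [->|/total] := eqVneq z v; first by rewrite (negPf (irr v)) /=; ring.
  by case: (e z v); case: (e v z) => //= _; ring.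
have at_v (F : T -> int) : \sum_z (z == v)%:R * F z = F v.
  by rewrite (bigD1 v) //= eqxx mul1r big1 ?addr0 // => z /negPf ->; rewrite mul0r.
have in_out (F : T -> int) :
    \sum_z (z \in outset e v)%:R * F z = \sum_(z in outset e v) F z.
  by rewrite [RHS]big_mkcond; apply: eq_bigr => z _; case: (z \in _); rewrite ?mul1r ?mul0r.
rewrite /arc_sign2 (eq_bigr _ (fun z _ => term z)) !sumrB -!mulr_sumr at_v in_out.
by rewrite /arc_sign (negPf (asym _ _ evu)) evu /score; ring.
Qed.

Lemma doubly_regularP : doubly_regular e <->
  (forall x, score x = 0) /\ (forall x y, x != y -> arc_sign2 x y = 1).
Proof.
have [irr [total _]] := tourn.
have scoreE x : \sum_(z in [set: T]) arc_sign x z = score x.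
  by apply: eq_bigl => z; rewrite inE.
split=> [[reg out_reg] | [score0 sign2_1]].
  have score0 x : score x = 0.
    by rewrite -scoreE; apply/(regular_on_sumE (in_setT x))/reg/in_setT.
  split=> // x y xy.
  wlog exy : x y xy / e x y => [wlog_xy|].
    by case/orP: (total _ _ xy) => /wlog_xy; [apply | rewrite arc_sign2C eq_sym; apply].
  have yout : y \in outset e x by rewrite inE.
  have /(regular_on_sumE yout) sum0 := out_reg x y yout.
  by rewrite arc_sign2_out // score0 sum0; ring.
split=> [u _ | v u uout].
  by apply/(regular_on_sumE (in_setT u)); rewrite scoreE.
have evu : e v u by rewrite inE in uout.
have vu : v != u by apply: contraTneq evu => <-; apply: irr.
apply/(regular_on_sumE uout); have := arc_sign2_out evu.
by rewrite sign2_1 // score0; move: (\sum_(z in _) _) => s; lia.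
Qed.

Lemma arc_sign2_eq1 : (forall x, score x = 0) ->
  (forall x y, x != y -> arc_sign2 x y ^+ 2 = 1) -> forall x y, x != y -> arc_sign2 x y = 1.
Proof.
move=> score0 sign2_sqr x y xy.
have sum0 : \sum_(z | z != x) (1 - arc_sign2 x z) = 0.
  have := sum_arc_sign2 x; rewrite (bigD1 x) //= arc_sign2_diag.
  under [RHS]eq_bigr do rewrite score0 mulr0.
  have n_gt0 : (0 < n)%N by apply/card_gt0P; exists x.
  rewrite big1_eq sumrB sumr_const cardC1 -subn1 natrB //.
  by move: (\sum_(z | z != x) _) => s; lia.
have ge0 z : z != x -> 0 <= 1 - arc_sign2 x z.
  move=> zx; have := sign2_sqr x z; rewrite eq_sym => /(_ zx).
  by move: (arc_sign2 x z) => c; rewrite subr_ge0 expr2; nia.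
have := psumr_eq0P ge0 sum0; rewrite eq_sym in xy => /(_ y xy).
by move: (arc_sign2 x y) => c; lia.
Qed.

Lemma c5_deficit_eq0 : odd n -> (4 < n)%N -> c5_deficit = 0 <-> doubly_regular e.
Proof.
move=> oddn n_gt4; rewrite doubly_regularP.
have W_ge0 : 0 <= sum_score_sqr by apply: sumr_ge0 => x _; apply: sqr_ge0.
split=> [G0 | [score0 sign2_1]]; last first.
  have W0 : sum_score_sqr = 0 by apply: big1 => x _; rewrite score0 expr0n.
  have V0 : sum_sign_score_sqr = 0.
    by apply: big1 => x _; rewrite big1 ?expr0n // => y _; rewrite score0 mulr0.
  have E0 : arc_sign2_excess = 0.
    by apply: big1 => x _; apply: big1 => y yx; rewrite sign2_1 1?eq_sym // expr1n subrr.
  by rewrite /c5_deficit W0 V0 E0; ring.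
have E_ge0 := arc_sign2_excess_ge0 oddn.
have p_gt0 : 0 < (n%:R - 3) * (n%:R - 4) :> int by rewrite natz; nia.
have n_gt1 : (1 < n)%N by apply: ltn_trans n_gt4.
have := c5_deficit_lower n_gt1; rewrite G0 mulr0 => low.
have pW_ge0 := mulr_ge0 (ltW p_gt0) W_ge0.
have E0 : arc_sign2_excess = 0 by lra.
have /eqP : (n%:R - 3) * (n%:R - 4) * sum_score_sqr = 0 by lra.
rewrite mulf_eq0 (gt_eqF p_gt0) /= => /eqP W0.
have score0 x : score x = 0.
  apply/eqP; rewrite -sqrf_eq0; apply/eqP.
  by apply: (psumr_eq0P _ W0) => // y _; apply: sqr_ge0.
split=> //; apply: arc_sign2_eq1 => // x y xy; apply/eqP; rewrite -subr_eq0; apply/eqP.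
have excess_x : \sum_(z | z != x) (arc_sign2 x z ^+ 2 - 1) = 0.
  apply: (psumr_eq0P _ E0) => // z _; apply: sumr_ge0 => t tz.
  by rewrite subr_ge0 arc_sign2_sqr_ge1 // eq_sym.
apply: (psumr_eq0P _ excess_x); last by rewrite eq_sym.
by move=> z zx; rewrite subr_ge0 arc_sign2_sqr_ge1 // eq_sym.
Qed.

Lemma ordS5_cases (a b : 'I_5) :
  [|| a == b, b == ordS a, b == ordS (ordS a), a == ordS b | a == ordS (ordS b)].
Proof. by case: a b => [[|[|[|[|[|?]]]]] ?] [[|[|[|[|[|?]]]]] ?]. Qed.

Lemma closed_walk5_inj (f : 'I_5 -> T) :
  (forall i, e (f i) (f (ordS i))) -> injective f.
Proof.
have [irr [_ asym]] := tourn.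
have no_loop x : ~ e x x by move/negP: (irr x).
have no_2cycle x y : e x y -> ~ e y x by move/asym/negP.
(* Two positions at cyclic distance 1 or 2 carrying the same vertex would
   give a loop or a 2-cycle. *)
move=> walk a b fab; case/orP: (ordS5_cases a b) => [/eqP //|].
case/or4P => /eqP ab; exfalso.
- by apply: (no_loop (f a)); rewrite {2}fab ab walk.
- by apply: (no_2cycle _ _ (walk a)); rewrite fab ab walk.
- by apply: (no_loop (f b)); rewrite {2}(esym fab) ab walk.
- by apply: (no_2cycle _ _ (walk b)); rewrite -fab ab walk.
Qed.

Lemma cyc5_seqsE :
  cyc5_seqs e = [set f : {ffun 'I_5 -> T} | [forall i, e (f i) (f (ordS i))]].
Proof.
apply/setP => f; rewrite !inE andb_idl // => /forallP walk.
exact/injectiveP/closed_walk5_inj.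
Qed.

Lemma mxtrace_adj_mx5E :
  \tr (adj_mx ^+ 5) = \sum_x0 \sum_x1 \sum_x2 \sum_x3 \sum_x4
    ((e x0 x1)%:R * ((e x1 x2)%:R * ((e x2 x3)%:R * ((e x3 x4)%:R * (e x4 x0)%:R)))).
Proof.
rewrite /mxtrace -sum_enum_val; apply: eq_bigr => i0 _.
rewrite !exprS expr0 mulr1 -!mulmxE mxE -sum_enum_val; apply: eq_bigr => i1 _.
rewrite [adj_mx _ _]mxE mxE mulr_sumr -sum_enum_val; apply: eq_bigr => i2 _.
rewrite [adj_mx _ _]mxE mxE !mulr_sumr -sum_enum_val; apply: eq_bigr => i3 _.
rewrite [adj_mx _ _]mxE mxE !mulr_sumr -sum_enum_val; apply: eq_bigr => i4 _.
by rewrite !mxE.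
Qed.

Lemma card_cyc5_seqs : (#|cyc5_seqs e|%:R : int) = \tr (adj_mx ^+ 5).
Proof.
rewrite mxtrace_adj_mx5E cyc5_seqsE -sum1dep_card natr_sum big_mkcond /= sum_ffun5.
apply: eq_bigr => x0 _; apply: eq_bigr => x1 _; apply: eq_bigr => x2 _.
apply: eq_bigr => x3 _; apply: eq_bigr => x4 _.
set f := ffun_of_5tuple _.
have -> : [forall i, e (f i) (f (ordS i))] = [&& e x0 x1, e x1 x2, e x2 x3, e x3 x4 & e x4 x0].
  apply/forallP/and5P => [walk | [? ? ? ? ?] [[|[|[|[|[|k]]]]] lt_k5]]; rewrite ?ffunE //.
  by split; [move: (walk 0) | move: (walk 1) | move: (walk 2) | move: (walk 3) | move: (walk 4)];
    rewrite !ffunE.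
by case: (e x0 x1); case: (e x1 x2); case: (e x2 x3); case: (e x3 x4); case: (e x4 x0);
  rewrite /= ?mul1r ?mul0r ?mulr0.
Qed.

End TournamentMatrices.

Lemma dvdn_prod5_consecutive n : (5 %| (n + 1) * n * (n - 1) * (n - 2) * (n - 3))%N.
Proof.
have -> : ((n + 1) * n * (n - 1) * (n - 2) * (n - 3) = (n + 1) ^_ 5)%N.
  by rewrite addn1 !ffactnS ffactn0 /= muln1 !subnS subn0 !mulnA.
by rewrite -bin_ffact dvdn_mull // dvdn_fact.
Qed.

Lemma div5_bound (X N : nat) (G : int) : (5 %| N)%N ->
  (32 * X)%:R = N%:R - 5 * G -> 0 <= G ->
  (160 * (X %/ 5) <= N)%N /\ ((160 * (X %/ 5) = N)%N <-> G = 0).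
Proof. by move=> N5 XE G_ge0; split; [lia | split=> h; lia]. Qed.

Local Close Scope ring_scope.
Unset Implicit Arguments.

Theorem theorem1 (T : finType) (e : rel T) :
  tournament e -> odd #|T| -> 5 <= #|T| ->
  let n := #|T| in
  160 * c5 e <= (n + 1) * n * (n - 1) * (n - 2) * (n - 3) /\
  (160 * c5 e = (n + 1) * n * (n - 1) * (n - 2) * (n - 3) <-> doubly_regular e).
Proof.
move=> tourn oddn n_ge5 n.
have count_c5 : ((32 * #|cyc5_seqs e|)%N%:R =
    ((n + 1) * n * (n - 1) * (n - 2) * (n - 3))%N%:R - 5 * c5_deficit e :> int)%R.
  rewrite natrM card_cyc5_seqs // mxtrace_adj_mx5 // /n !natrM natrD !natrB //;
    exact: leq_trans n_ge5.
have n_gt1 : 1 < n by apply: leq_trans n_ge5.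
have [c5_le c5_eq] :=
  div5_bound (dvdn_prod5_consecutive n) count_c5 (c5_deficit_ge0 tourn oddn n_gt1).
by split=> //; rewrite c5_eq; exact: c5_deficit_eq0.
Qed.
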